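(* Let $x_1,x_2,\dots$ be i.i.d. random variables with values in $[-R,R]$, $\beta>0$, $\hat\rho_n=\frac1\beta\ln\big(\frac1n\sum_{t=1}^n\exp(\beta x_t)\big)$, and $\mu=\lim_{n\to\infty}\mathbb{E}[\hat\rho_n]=\frac1\beta\ln\mathbb{E}[\exp(\beta x_1)]$. Then there exist constants $\theta>1$, $\xi>1$ and $1/2\le\eta<1$ such that for any $z\ge1$ and $n\in\mathbb{N}$, $$\mathbb{P}[n\hat\rho_n-n\mu\ge n^\eta z]\le\frac{\theta}{z^\xi},\qquad \mathbb{P}[n\hat\rho_n-n\mu\le -n^\eta z]\le\frac{\theta}{z^\xi}.$$ *)

From HB Require Import structures.
From mathcomp Require Import all_boot all_order all_algebra.
From mathcomp Require Import all_classical all_reals all_analysis.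
Set Implicit Arguments. Unset Strict Implicit. Unset Printing Implicit Defensive.
Import Order.TTheory GRing.Theory Num.Theory.
Import numFieldNormedType.Exports.
Local Open Scope classical_set_scope.
Local Open Scope ring_scope.

Definition mutually_independent d (T : measurableType d) (R : realType)
  (P : probability T R) (X : nat -> {RV P >-> R}) : Prop :=
  forall (s : seq nat) (B : nat -> set R),
    uniq s -> (forall i, measurable (B i)) ->
    P (\bigcap_(i in [set j | j \in s]) (X i @^-1` B i)) =
    (\prod_(i <- s) P (X i @^-1` B i))%E.

Definition identically_distributed d (T : measurableType d) (R : realType)
  (P : probability T R) (X : nat -> {RV P >-> R}) : Prop :=
  forall (i : nat) (B : set R), measurable B ->
    P (X i @^-1` B) = P (X 0%N @^-1` B).

Definition iid d (T : measurableType d) (R : realType)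
  (P : probability T R) (X : nat -> {RV P >-> R}) : Prop :=
  mutually_independent X /\ identically_distributed X.

(* rho_hat_n = (1/beta) ln ( (1/n) sum_{t=1}^n exp(beta x_t) ),
   with x_1, ..., x_n being X 0, ..., X (n-1). *)
Definition rho_hat d (T : measurableType d) (R : realType)
  (P : probability T R) (X : nat -> {RV P >-> R}) (beta : R) (n : nat)
  (w : T) : R :=
  beta^-1 * ln (n%:R^-1 * \sum_(t < n) expR (beta * X t w)).

Definition mu_risk d (T : measurableType d) (R : realType)
  (P : probability T R) (X : nat -> {RV P >-> R}) (beta : R) : R :=
  beta^-1 * ln (fine ('E_P[fun w => expR (beta * X 0%N w)])).

(* Put Y_t = exp (beta x_t), which lies in [c, C] with c = exp (- beta R) and
   C = exp (beta R), and m = E[Y_1]. Pairwise independence makes the centred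
   Y_t uncorrelated, so E[(sum_t (Y_t - m))^2] <= n C^2 and Chebyshev gives
   P(|sum_t Y_t - n m| >= eps) <= n C^2 / eps^2. Both the sample mean of the
   Y_t and m lie in [c, +oo), where ln is (1/c)-Lipschitz, hence
   beta c |n rho_n - n mu| <= |sum_t Y_t - n m|. Taking eps = beta c sqrt(n) z
   gives both tails with eta = 1/2, xi = 2 and theta = (C / (beta c))^2 + 1. *)

From HB Require Import structures.
From mathcomp Require Import all_boot all_order all_algebra.
From mathcomp Require Import all_classical all_reals all_analysis.
From mathcomp Require Import measurable_realfun.
From mathcomp Require Import ring lra.
Set Implicit Arguments. Unset Strict Implicit. Unset Printing Implicit Defensive.
Import Order.TTheory GRing.Theory Num.Theory.
Import numFieldNormedType.Exports.
Local Open Scope classical_set_scope.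
Local Open Scope ring_scope.

Lemma mul_lnB_le (R : realType) (x y : R) : 0 < x -> 0 < y ->
  y * (ln x - ln y) <= x - y.
Proof.
move=> x0 y0; have := expR_ge1Dx (ln x - ln y).
rewrite expRB !lnK ?posrE // ler_pdivlMr // mulrDl mul1r; lra.
Qed.

Lemma norm_lnB_le (R : realType) (c x y : R) : 0 < c -> c <= x -> c <= y ->
  c * `|ln x - ln y| <= `|x - y|.
Proof.
wlog yx : x y / y <= x => [wlog_yx c0 cx cy|c0 cx cy].
  have [/wlog_yx->//|/ltW xy] := leP y x.
  by rewrite distrC (distrC x); apply: wlog_yx.
have [x0 y0] : 0 < x /\ 0 < y by split; apply: lt_le_trans c0 _.
have lnyx : ln y <= ln x by rewrite ler_ln ?posrE.
rewrite !ger0_norm ?subr_ge0 //; apply: le_trans (mul_lnB_le x0 y0).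
by rewrite ler_wpM2r ?subr_ge0.
Qed.

Lemma measurable_le_set d (T : measurableType d) (R : realType) (f g : T -> R) :
  measurable_fun setT f -> measurable_fun setT g -> measurable [set w | f w <= g w].
Proof. by move=> mf mg; rewrite -[X in measurable X]setTI; apply: measurable_fun_le. Qed.

Section probability_lemmas.
Context d (T : measurableType d) (R : realType) (P : probability T R).
Local Open Scope ereal_scope.

Lemma bounded_Lfun1 (f : T -> R) (M : R) :
  measurable_fun setT f -> (forall w, `|f w| <= M)%R -> f \in Lfun P 1.
Proof.
move=> mf fM; apply/Lfun1_integrable/measurable_bounded_integrable => //.
- exact: (le_lt_trans (probability_le1 P measurableT) (ltry _)).
- exists M; split; first exact: num_real.
  by move=> M' MM' w _; apply: le_trans (fM w) (ltW MM').
Qed.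

Lemma expectation_big_ord n (F : 'I_n -> T -> R) :
  (forall i, F i \in Lfun P 1) ->
  'E_P[fun w => (\sum_(i < n) F i w)%R] = \sum_(i < n) 'E_P[F i].
Proof.
move=> F1; rewrite -fct_sumE -(big_map F xpredT id) expectation_sum ?big_map //.
by move=> _ /mapP[i _ ->].
Qed.

Lemma markov_sqr (f : T -> R) (eps : R) : (0 < eps)%R -> measurable_fun setT f ->
  P [set w | eps <= `|f w|]%R <= (eps ^- 2)%:E * 'E_P[fun w => f w ^+ 2]%R.
Proof.
move=> eps0 mf.
pose F : {RV P >-> R} := HB.pack f (isMeasurableFun.Build _ _ _ _ f mf).
rewrite -lee_pdivrMl ?invr_gt0 ?exprn_gt0 // invrK.
have -> : [set w | eps <= `|f w|]%R = [set w | eps%:E <= `|(F w)%:E|].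
  by apply/seteqP; split=> w /=; rewrite lee_fin.
have -> : (fun w => f w ^+ 2)%R = ((fun x => x ^+ 2) \o Num.norm \o F)%R.
  by apply/funext=> w /=; rewrite real_normK ?num_real.
apply: (@markov _ _ _ P F (fun x => x ^+ 2)%R eps eps0).
- exact: exprn_measurable.
- by move=> r _; exact: sqr_ge0.
- by move=> x y; rewrite !nnegrE => x0 y0; rewrite ler_sqr.
Qed.

Lemma expectation_sqr_sum_uncorrelated n (Z : nat -> T -> R) (M : R) :
  (forall i, measurable_fun setT (Z i)) -> (forall i w, `|Z i w| <= M)%R ->
  (forall i j, i != j -> 'E_P[(Z i * Z j)%R] = 0) ->
  'E_P[fun w => (\sum_(i < n) Z i w) ^+ 2]%R <= (n%:R * M ^+ 2)%:E.
Proof.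
move=> mZ ZM Z_uncor.
have ZZ1 i j : (Z i * Z j)%R \in Lfun P 1.
  apply: (bounded_Lfun1 (M := M * M)); first exact: measurable_funM.
  by move=> w; rewrite normrM ler_pM.
have -> : (fun w => (\sum_(i < n) Z i w) ^+ 2)%R =
          (fun w => \sum_(i < n) \sum_(j < n) (Z i * Z j)%R w)%R.
  by apply/funext => w; rewrite expr2 mulr_suml; under eq_bigr do rewrite mulr_sumr.
rewrite expectation_big_ord => [|i]; last first.
  by rewrite -fct_sumE; apply: rpred_sum => j _.
under eq_bigr do rewrite expectation_big_ord //.
rewrite (_ : (n%:R * M ^+ 2)%:E = \sum_(i < n) (M ^+ 2)%:E); last first.
  by rewrite sumEFin sumr_const card_ord mulr_natl.
apply: lee_sum => i _; rewrite (bigD1 i) //= big1 ?adde0 => [|j ji]; last first.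
  by apply: Z_uncor; rewrite eq_sym.
rewrite -(expectation_cst P (M ^+ 2)); apply: expectation_le => //.
- exact: measurable_funM.
- by move=> w /=; rewrite -expr2 sqr_ge0.
- by move=> w; rewrite sqr_ge0.
- apply: aeW => w; change (Z i w * Z i w <= M ^+ 2)%R.
  by apply: le_trans (ler_norm _) _; rewrite normrM expr2 ler_pM.
Qed.

End probability_lemmas.

Section independence.
Context d (T : measurableType d) (R : realType) (P : probability T R).
Local Open Scope ereal_scope.

Lemma mutually_independent_pair (X : nat -> {RV P >-> R}) s t :
  mutually_independent X -> s != t -> forall A B, measurable A -> measurable B ->
  P (X s @^-1` A `&` X t @^-1` B) = P (X s @^-1` A) * P (X t @^-1` B).
Proof.
move=> indX st A B mA mB; have ts : t != s by rewrite eq_sym.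
pose C i := if i == s then A else if i == t then B else setT.
have mC i : measurable (C i) by rewrite /C; case: ifP => // _; case: ifP.
have := indX [:: s; t] C; rewrite /= inE st big_cons big_cons big_nil mule1.
rewrite /C eqxx (negbTE ts) eqxx => <- //; congr (P _).
apply/seteqP; split=> w.
- move=> [Aw Bw] i /=; rewrite !inE => /orP[]/eqP->; first by rewrite eqxx.
  by rewrite (negbTE ts) eqxx.
- move=> CX; split; first by have := CX s; rewrite eqxx; apply; rewrite /= mem_head.
  by have := CX t; rewrite (negbTE ts) eqxx; apply; rewrite /= !inE eqxx orbT.
Qed.

Lemma ge0_expectation_indepM (X1 X2 : {RV P >-> R}) (f g : R -> R) :
  (forall A B, measurable A -> measurable B ->
     P (X1 @^-1` A `&` X2 @^-1` B) = P (X1 @^-1` A) * P (X2 @^-1` B)) ->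
  measurable_fun setT f -> measurable_fun setT g ->
  (forall x, 0 <= f x)%R -> (forall x, 0 <= g x)%R ->
  'E_P[fun w => f (X1 w) * g (X2 w)]%R = 'E_P[f \o X1] * 'E_P[g \o X2].
Proof.
move=> indX mf mg f0 g0; rewrite !unlock.
pose X12 := fun w => (X1 w, X2 w).
have mX12 : measurable_fun setT X12 by apply: measurable_fun_pair.
pose X12m : {RV P >-> (R * R)%type} :=
  HB.pack X12 (isMeasurableFun.Build _ _ _ _ X12 mX12).
pose F := fun p : (R * R)%type => (f p.1 * g p.2)%:E.
have mF : measurable_fun setT F.
  by apply/measurable_EFinP/measurable_funM; apply: measurableT_comp.
have F0 p : 0 <= F p by rewrite lee_fin mulr_ge0.
have -> : \int[P]_w (f (X1 w) * g (X2 w))%:E = \int[distribution P X12m]_p F p.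
  by rewrite ge0_integral_distribution.
rewrite (eq_measure_integral (distribution P X1 \x distribution P X2)); last first.
  by move=> A mA _; apply/esym/product_measure_unique.
rewrite fubini_tonelli1 // /fubini_F /F /=.
under eq_integral => x _.
  under eq_integral do rewrite EFinM.
  rewrite ge0_integralZl_EFin //; last 2 first.
  - by move=> y _; rewrite lee_fin.
  - exact/measurable_EFinP.
  over.
rewrite ge0_integralZr //=.
- by rewrite (ge0_integral_distribution X1 (f := EFin \o f))
    ?(ge0_integral_distribution X2 (f := EFin \o g)) //; exact/measurable_EFinP.
- exact/measurable_EFinP.
- by move=> x _; rewrite lee_fin.
- by apply: integral_ge0 => y _; rewrite lee_fin.
Qed.

Lemma identically_distributed_expectation (X : nat -> {RV P >-> R}) (f : R -> R) t :
  identically_distributed X -> measurable_fun setT f -> (forall x, 0 <= f x)%R ->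
  'E_P[f \o X t] = 'E_P[f \o X 0%N].
Proof.
move=> idX mf f0; rewrite !unlock.
have mEf : measurable_fun setT (EFin \o f) by exact/measurable_EFinP.
have Ef0 x : 0 <= (EFin \o f) x by rewrite lee_fin.
rewrite -!(ge0_integral_distribution _ mEf Ef0).
by apply: eq_measure_integral => A mA _; exact: idX.
Qed.

End independence.

Section risk_estimator.
Context d (T : measurableType d) (R : realType) (P : probability T R).
Variables (X : nat -> {RV P >-> R}) (Rb beta : R).
Hypotheses (iidX : iid X) (X_bounded : forall t w, - Rb <= X t w <= Rb).
Hypothesis beta_gt0 : 0 < beta.

Let u x := expR (beta * x).
Let Y t := u \o X t.
Let m := fine ('E_P[Y 0%N])%E.
Let e1 := expR (- (beta * Rb)).
Let e2 := expR (beta * Rb).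

Let measurable_u : measurable_fun setT u.
Proof. by apply: measurableT_comp; [exact: measurable_expR | exact: measurable_funM]. Qed.

Let u_ge0 x : 0 <= u x. Proof. exact: expR_ge0. Qed.

Let Y_ge0 t w : 0 <= Y t w. Proof. exact: u_ge0. Qed.

Let measurable_Y t : measurable_fun setT (Y t).
Proof. exact: measurableT_comp. Qed.

Let Y_bounds t w : e1 <= Y t w <= e2.
Proof.
have /andP[lo hi] := X_bounded t w.
by rewrite /= !ler_expR -mulrN !ler_pM2l.
Qed.

Let Y_Lfun1 t : Y t \in Lfun P 1.
Proof.
apply: (bounded_Lfun1 P (M := e2)) => // w.
by have /andP[_] := Y_bounds t w; rewrite ger0_norm ?Y_ge0.
Qed.

Let expectation_Y t : ('E_P[Y t] = m%:E)%E.
Proof.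
have [_ idX] := iidX.
rewrite /m (identically_distributed_expectation t idX) // fineK //.
exact: expectation_fin_num.
Qed.

Let m_bounds : e1 <= m <= e2.
Proof.
rewrite -!lee_fin -(expectation_Y 0) -!(expectation_cst P).
apply/andP; split; apply: expectation_le => //.
- by move=> w; exact: expR_ge0.
- by apply: aeW => w; have /andP[] := Y_bounds 0 w.
- by move=> w; exact: expR_ge0.
- by apply: aeW => w; have /andP[] := Y_bounds 0 w.
Qed.

Let Y_uncorrelated s t : s != t ->
  ('E_P[(Y s \- cst m) * (Y t \- cst m)] = 0)%E.
Proof.
move=> st; have [indX _] := iidX.
have YY : ('E_P[Y s * Y t] = (m * m)%:E)%E.
  rewrite EFinM -{1}(expectation_Y s) -(expectation_Y t).
  exact: (ge0_expectation_indepM (mutually_independent_pair indX st)).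
have YY1 : (Y s * Y t)%R \in Lfun P 1.
  apply: (bounded_Lfun1 P (M := e2 * e2)); first exact: measurable_funM.
  move=> w; have /andP[_ Ys] := Y_bounds s w; have /andP[_ Yt] := Y_bounds t w.
  by rewrite normrM !ger0_norm ?Y_ge0 ?ler_pM.
have := covarianceE (Y_Lfun1 s) (Y_Lfun1 t) YY1.
by rewrite covariance.unlock !expectation_Y YY -EFinM /= => ->; rewrite subee.
Qed.

Let sum_Y_deviation (n : nat) (eps : R) : 0 < eps ->
  (P [set w | eps <= `|\sum_(i < n) (Y i w - m)|]%R <=
    ((n%:R * e2 ^+ 2) / eps ^+ 2)%:E)%E.
Proof.
move=> eps0; apply: le_trans (markov_sqr P eps0 _) _.
  by apply: measurable_sum => i; exact: measurable_funB.
rewrite [(_ / _)%R]mulrC EFinM; apply: lee_wpmul2l.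
  by rewrite lee_fin invr_ge0 sqr_ge0.
apply: (expectation_sqr_sum_uncorrelated n (Z := fun i => Y i \- cst m)) => // i.
  exact: measurable_funB.
move=> w; have /andP[Y1 Y2] := Y_bounds i w; have /andP[m1 m2] := m_bounds.
have e1_gt0 : 0 < e1 := expR_gt0 _.
rewrite /= ler_norml; apply/andP; split; lra.
Qed.

Let rho_hat_deviation_le (n : nat) (w : T) : (0 < n)%N ->
  beta * e1 * `|n%:R * rho_hat X beta n w - n%:R * mu_risk X beta| <=
  `|\sum_(i < n) (Y i w - m)|.
Proof.
move=> n_gt0; have n0 : 0 < n%:R :> R by rewrite ltr0n.
have e1_gt0 : 0 < e1 := expR_gt0 _.
have /andP[e1m _] := m_bounds.
set a := n%:R^-1 * \sum_(i < n) Y i w.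
have e1a : e1 <= a.
  have : \sum_(i < n) e1 <= \sum_(i < n) Y i w.
    by apply: ler_sum => i _; have /andP[] := Y_bounds i w.
  by rewrite sumr_const card_ord -mulr_natl /a ler_pdivlMl.
have -> : \sum_(i < n) (Y i w - m) = n%:R * (a - m).
  by rewrite sumrB sumr_const card_ord /a mulrBr mulVKf ?gt_eqF // mulr_natl.
change (rho_hat X beta n w) with (beta^-1 * ln a).
change (mu_risk X beta) with (beta^-1 * ln m).
rewrite -!mulrBr !normrM (ger0_norm (ler0n _ n)).
rewrite ger0_norm ?invr_ge0 ?(ltW beta_gt0) //.
have -> : beta * e1 * (n%:R * (beta^-1 * `|ln a - ln m|)) =
          n%:R * (e1 * `|ln a - ln m|) by field; rewrite gt_eqF.
by rewrite ler_pM2l // norm_lnB_le.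
Qed.

Lemma measurable_rho_hat (n : nat) : measurable_fun setT (rho_hat X beta n).
Proof.
apply: measurable_funM => //; apply: measurableT_comp; first exact: measurable_ln.
by apply: measurable_funM => //; apply: measurable_sum => i; exact: measurable_Y.
Qed.

Lemma rho_hat_concentration (n : nat) (z : R) : (0 < n)%N -> 0 < z ->
  (P [set w | n%:R `^ 2^-1 * z <=
              `|n%:R * rho_hat X beta n w - n%:R * mu_risk X beta|]%R <=
    ((expR (2 * (beta * Rb)) / (beta * z)) ^+ 2)%:E)%E.
Proof.
move=> n_gt0 z_gt0; have n0 : 0 < n%:R :> R by rewrite ltr0n.
have e1_gt0 : 0 < e1 := expR_gt0 _.
set s := n%:R `^ 2^-1 * z.
have eps_gt0 : 0 < beta * e1 * s by rewrite !mulr_gt0 ?powR_gt0.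
have e2E : e2 = expR (2 * (beta * Rb)) * e1 by rewrite -expRD; congr expR; lra.
have sqrt_n2 : (n%:R `^ 2^-1) ^+ 2 = n%:R :> R.
  by rewrite powR12_sqrt ?ler0n // sqr_sqrtr ?ler0n.
rewrite (_ : (_ / _) ^+ 2 = n%:R * e2 ^+ 2 / (beta * e1 * s) ^+ 2); last first.
  by rewrite e2E /s !exprMn sqrt_n2; field; rewrite !gt_eqF.
apply: le_trans (sum_Y_deviation n eps_gt0); apply: le_measure; rewrite ?inE.
- apply: measurable_le_set => //; apply: measurableT_comp => //.
  by apply: measurable_funB => //; apply: measurable_funM => //; exact: measurable_rho_hat.
- apply: measurable_le_set => //; apply: measurableT_comp => //.
  by apply: measurable_sum => i; exact: measurable_funB.
- move=> w /= dev_w; apply: le_trans (rho_hat_deviation_le w n_gt0).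
  by rewrite ler_pM2l ?mulr_gt0.
Qed.

End risk_estimator.

Theorem lemma9 (d : measure_display) (T : measurableType d) (R : realType)
  (P : probability T R) (X : nat -> {RV P >-> R}) (Rb beta : R) :
  iid X ->
  (forall (t : nat) (w : T), - Rb <= X t w <= Rb) ->
  0 < beta ->
  exists (theta xi eta : R),
    [/\ 1 < theta, 1 < xi, 2^-1 <= eta, eta < 1 &
    forall (z : R) (n : nat), 1 <= z -> (0 < n)%N ->
      (P [set w | (n%:R * rho_hat X beta n w - n%:R * mu_risk X beta
                    >= n%:R `^ eta * z)%R]
         <= (theta / z `^ xi)%:E)%E /\
      (P [set w | (n%:R * rho_hat X beta n w - n%:R * mu_risk X beta
                    <= - (n%:R `^ eta * z))%R]
         <= (theta / z `^ xi)%:E)%E].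
Proof.
move=> iidX X_bounded beta_gt0.
set K := (expR (2 * (beta * Rb)) / beta) ^+ 2.
have K_gt0 : 0 < K by rewrite exprn_gt0 ?divr_gt0 ?expR_gt0.
exists (K + 1), 2, 2^-1; split; [by rewrite ltrDr | lra | by [] | lra |].
move=> z n z_ge1 n_gt0; have z_gt0 : 0 < z := lt_le_trans ltr01 z_ge1.
set dev := fun w => n%:R * rho_hat X beta n w - n%:R * mu_risk X beta.
set s := n%:R `^ 2^-1 * z.
have mdev : measurable_fun setT dev.
  by apply: measurable_funB => //; apply: measurable_funM => //; exact: measurable_rho_hat.
have dev_le A : measurable A -> A `<=` [set w | s <= `|dev w|] ->
    (P A <= ((K + 1) / z `^ 2)%:E)%E.
  move=> mA As; apply: le_trans (le_measure _ _ _ As) _; rewrite ?inE //.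
    by apply: measurable_le_set => //; exact: measurableT_comp.
  apply: le_trans (rho_hat_concentration iidX X_bounded beta_gt0 n_gt0 z_gt0) _.
  rewrite lee_fin powR_mulrn ?(ltW z_gt0) // (_ : (_ / _) ^+ 2 = K / z ^+ 2).
    by rewrite ler_wpM2r ?invr_ge0 ?sqr_ge0 ?lerDl.
  by rewrite /K; field; rewrite !gt_eqF.
split; apply: dev_le.
- exact: measurable_le_set.
- by move=> w /= s_dev; apply: le_trans s_dev (ler_norm _).
- exact: measurable_le_set.
- by move=> w /= dev_s; rewrite -normrN; apply: le_trans (ler_norm _); rewrite lerNr.
Qed.
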